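(* Let $G$ be a simple graph and $W\subseteq V(G)$, and let $\varphi'$ be an assignment of the colors $I,F$ to the vertices of $W$ that is a near-bipartite coloring of $G[W]$. Suppose $G-W$ is a forest in which every vertex has degree 3 in $G$. If every component $T$ of $G-W$ is $F$-odd or $F$-leaf-good, then $\varphi'$ extends to a near-bipartite coloring of $G$.
   Context: A near-bipartite coloring is a partition into $I,F$ with $I$ independent and the subgraph induced by $F$ a forest. An $F$-edge is an edge joining a vertex of $G-W$ to a vertex of $W$ colored $F$ by $\varphi'$. A component $T$ of $G-W$ is $F$-odd if the number of $F$-edges incident to $V(T)$ is odd, and $F$-leaf-good if some leaf of $T$ (vertex of degree at most 1 in $T$) has at least two neighbors in $W$ colored $I$. *)

From mathcomp Require Import all_boot.
Set Implicit Arguments. Unset Strict Implicit. Unset Printing Implicit Defensive.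

Definition simple_graph (V : finType) (e : rel V) : Prop :=
  symmetric e /\ irreflexive e.

Notation colI := true (only parsing).
Notation colF := false (only parsing).

Definition independent (V : finType) (e : rel V) (S : {set V}) : Prop :=
  forall x y, x \in S -> y \in S -> ~~ e x y.

Definition induces_forest (V : finType) (e : rel V) (S : {set V}) : Prop :=
  ~ exists c : seq V,
      [/\ uniq c, 3 <= size c, all (fun x => x \in S) c & cycle e c].

Definition near_bipartite_on (V : finType) (e : rel V) (S : {set V})
    (phi : V -> bool) : Prop :=
  independent e [set x in S | phi x] /\
  induces_forest e [set x in S | ~~ phi x].

Definition degree (V : finType) (e : rel V) (x : V) : nat := #|[set y | e x y]|.

Definition rel_out (V : finType) (e : rel V) (W : {set V}) : rel V :=
  fun x y => [&& e x y, x \notin W & y \notin W].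

Definition comp_out (V : finType) (e : rel V) (W : {set V}) (x : V) : {set V} :=
  [set y | (y \notin W) && connect (rel_out e W) x y].

Definition num_F_edges (V : finType) (e : rel V) (W : {set V})
    (phi : V -> bool) (C : {set V}) : nat :=
  #|[set p : V * V | [&& p.1 \in C, p.2 \in W, ~~ phi p.2 & e p.1 p.2]]|.

Definition F_odd (V : finType) (e : rel V) (W : {set V})
    (phi : V -> bool) (C : {set V}) : Prop :=
  odd (num_F_edges e W phi C).

Definition F_leaf_good (V : finType) (e : rel V) (W : {set V})
    (phi : V -> bool) (C : {set V}) : Prop :=
  exists2 x, x \in C &
    (#|[set y in C | e x y]| <= 1) /\
    (2 <= #|[set w in W | e x w && phi w]|).

From mathcomp Require Import all_boot.
From mathcomp Require Import zify.
Set Implicit Arguments. Unset Strict Implicit. Unset Printing Implicit Defensive.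

(* Colour the vertices of G - W one at a time, keeping the hypotheses as an
   invariant.  Let T be a component of G - W; the three edges at a vertex of T
   are split among T, the I-part and the F-part of W.  If T is a single vertex,
   or some leaf of T has an F-neighbour, colour that vertex I when it has at
   least two F-neighbours and F otherwise: the colouring stays near-bipartite,
   and the rest of T keeps the parity of its F-edges, or keeps its leaf with
   two I-neighbours (which cannot be the coloured vertex).  Otherwise both ends
   of a longest path in T are leaves with two I-neighbours; colour one of them
   F, and the other makes the rest of T F-leaf-good.  Removing a leaf keeps T
   connected, and the other components do not see the coloured vertex. *)

Section Graph.
Variables (V : finType) (e : rel V).
Hypothesis sym_e : symmetric e.
Hypothesis irr_e : irreflexive e.

Lemma induces_forest_subset (A B : {set V}) :
  A \subset B -> induces_forest e B -> induces_forest e A.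
Proof.
move=> sAB forestB [c [uc c3 cA cyc]]; apply: forestB; exists c; split=> //.
by apply/allP=> y /(allP cA) /(subsetP sAB).
Qed.

Definition deg_in (C : {set V}) z := #|[set y in C | e z y]|.
Definition degI (W : {set V}) (phi : V -> bool) z := #|[set w in W | e z w && phi w]|.
Definition degF (W : {set V}) (phi : V -> bool) z := #|[set w in W | e z w && ~~ phi w]|.

Definition component_good (W : {set V}) (phi : V -> bool) (C : {set V}) :=
  F_odd e W phi C \/ F_leaf_good e W phi C.

Lemma num_F_edgesE (W C : {set V}) (phi : V -> bool) :
  num_F_edges e W phi C = \sum_(z in C) degF W phi z.
Proof.
rewrite /num_F_edges -sum1_card.
transitivity (\sum_(i | i \in C) \sum_(j | [&& j \in W, ~~ phi j & e i j]) 1).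
  by rewrite pair_big_dep; apply: eq_bigl => p; rewrite inE.
apply: eq_bigr => i _; rewrite sum1dep_card /degF; apply: eq_card => j.
by rewrite !inE; case: (j \in W); case: (e i j); case: (phi j).
Qed.

Lemma degree_split (W C : {set V}) (phi : V -> bool) v :
  (forall z, e v z -> (z \in C) = (z \notin W)) ->
  degree e v = deg_in C v + degI W phi v + degF W phi v.
Proof.
move=> hC; rewrite /degree -(cardsID W [set y | e v y]).
rewrite -(cardsID [set y | phi y] ([set y | e v y] :&: W)).
have -> : #|[set y | e v y] :\: W| = deg_in C v.
  apply: eq_card => z; rewrite !inE.
  by case evz: (e v z); rewrite ?andbF ?andbT // hC.
have -> : #|[set y | e v y] :&: W :&: [set y | phi y]| = degI W phi v.
  by apply: eq_card => z; rewrite !inE; case: (e v z); case: (z \in W); case: (phi z).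
have -> : #|[set y | e v y] :&: W :\: [set y | phi y]| = degF W phi v.
  by apply: eq_card => z; rewrite !inE; case: (e v z); case: (z \in W); case: (phi z).
by rewrite [LHS]addnC addnA.
Qed.

Lemma rel_out_sym (W : {set V}) : symmetric (rel_out e W).
Proof.
move=> a b; rewrite /rel_out sym_e.
by case: (a \in W); case: (b \in W); rewrite ?andbF.
Qed.

Lemma connect_out_sym (W : {set V}) : connect_sym (rel_out e W).
Proof. exact/sym_connect_sym/rel_out_sym. Qed.

Lemma connect_out_subset (W1 W2 : {set V}) y z : W1 \subset W2 ->
  connect (rel_out e W2) y z -> connect (rel_out e W1) y z.
Proof.
move=> sW; apply: connect_sub => a b /and3P [eab aW bW]; apply: connect1.
by rewrite /rel_out eab (contra (subsetP sW a)) // (contra (subsetP sW b)).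
Qed.

Lemma path_out_setU1 (W : {set V}) v y p : path (rel_out e W) y p -> v \notin y :: p ->
  path (rel_out e (v |: W)) y p.
Proof.
elim: p y => [|a p IH] y //= /andP [ya pa]; rewrite !inE !negb_or => /and3P [yv av vp].
rewrite IH ?inE ?negb_or ?av //; move: ya; rewrite /rel_out !inE !negb_or => /and3P [-> -> ->].
by rewrite eq_sym yv eq_sym av.
Qed.

Lemma connect_out_setU1 (W : {set V}) v y z : connect (rel_out e W) y z ->
  (forall u, connect (rel_out e W) y u -> u != v) ->
  connect (rel_out e (v |: W)) y z.
Proof.
move=> /connectP [p]; elim: p y => [|a p IH] y /=; first by move=> _ -> _.
move=> /andP [ya pa] zl avoid; apply: (connect_trans (y := a)).
  apply: connect1; have := avoid a (connect1 ya); have := avoid y (connect0 _ y).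
  by move: ya; rewrite /rel_out !inE !negb_or => /and3P [-> -> ->] -> ->.
by apply: IH => // u au; apply: avoid; exact: connect_trans (connect1 ya) au.
Qed.

Lemma cycle_two_neighbours (c : seq V) v : uniq c -> 3 <= size c -> cycle e c ->
  v \in c -> exists u w, [/\ u \in c, w \in c, u != w, e v u & e v w].
Proof.
move=> uc c3 cyc /rot_to [i s rot_c].
have : uniq (v :: s) by rewrite -rot_c rot_uniq.
have : 3 <= size (v :: s) by rewrite -rot_c size_rot.
have : cycle e (v :: s) by rewrite -rot_c rot_cycle.
have mem_s u : u \in s -> u \in c by move=> us; rewrite -(mem_rot i) rot_c inE us orbT.
case: s rot_c mem_s => [|p [|q0 q]] // _ mem_s.
rewrite /= rcons_path => /and4P [evp _ _ elv] _ /and4P [_ pq _ _].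
exists p, (last q0 q); split => //.
- by rewrite mem_s ?inE ?eqxx.
- by rewrite mem_s // inE mem_last orbT.
- by apply: contraNneq pq => ->; rewrite mem_last.
- by rewrite sym_e.
Qed.

Definition set_color (phi : V -> bool) v c y := if y == v then c else phi y.

Section SetColor.
Variables (W : {set V}) (phi : V -> bool) (v : V) (c : bool).
Hypothesis vW : v \notin W.
Local Notation W' := (v |: W).
Local Notation phi' := (set_color phi v c).

Lemma degF_set_color z : z != v -> degF W' phi' z = degF W phi z + (~~ c && e z v).
Proof.
move=> zv; rewrite /degF; case: c => /=.
  rewrite addn0; apply: eq_card => w; rewrite !inE /set_color.
  by case: (w =P v) => [->|] //=; rewrite (negbTE vW) andbF.
case ezv: (e z v) => /=.
  transitivity #|v |: [set w in W | e z w && ~~ phi w]|.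
    apply: eq_card => w; rewrite !inE /set_color.
    by case: (w =P v) => [->|] //=; rewrite ezv.
  by rewrite cardsU1 inE (negbTE vW) /= addnC.
rewrite addn0; apply: eq_card => w; rewrite !inE /set_color.
by case: (w =P v) => [->|] //=; rewrite ezv !andbF.
Qed.

(* The F-edges at v are lost from C, and if v is coloured F its edges into
   C become F-edges. *)
Lemma num_F_edges_set_color (C : {set V}) : v \in C ->
  num_F_edges e W' phi' (C :\ v) + degF W phi v =
  num_F_edges e W phi C + (if c then 0 else deg_in C v).
Proof.
move=> vC; rewrite !num_F_edgesE (big_setD1 v vC) /=.
rewrite (eq_bigr (fun z => degF W phi z + (~~ c && e z v))); last first.
  by move=> z; rewrite !inE => /andP [zv _]; exact: degF_set_color.
rewrite big_split /=.
have -> : \sum_(z in C :\ v) (~~ c && e z v : nat) = (if c then 0 else deg_in C v).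
  case: c => /=; first by rewrite big1.
  rewrite /deg_in -sum1_card [RHS]big_mkcond [LHS]big_mkcond; apply: eq_bigr => z _.
  rewrite !inE sym_e; case: (z =P v) => [->|_] /=; first by rewrite irr_e; case: (v \in C).
  by case: (z \in C); case: (e v z).
by rewrite addnC addnA.
Qed.

Lemma degI_set_color z : degI W phi z <= degI W' phi' z.
Proof.
apply: subset_leq_card; apply/subsetP => y; rewrite !inE /set_color => /andP [yW /andP [-> py]].
by case: (y =P v) => [yv|]; [move: vW; rewrite -yv yW | rewrite yW orbT py].
Qed.

Lemma F_leaf_good_set_color (C : {set V}) w : w \in C -> w != v ->
  deg_in C w <= 1 -> 2 <= degI W phi w -> F_leaf_good e W' phi' (C :\ v).
Proof.
move=> wC wv leaf_w degI_w; exists w; first by rewrite !inE wv wC.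
split; last exact: leq_trans degI_w (degI_set_color w).
apply: leq_trans leaf_w; apply: subset_leq_card; apply/subsetP => y.
by rewrite !inE => /andP [/andP [_ ->] ->].
Qed.

Lemma component_good_set_color_far (C : {set V}) : (forall p, p \in C -> ~~ e p v) ->
  component_good W phi C -> component_good W' phi' C.
Proof.
move=> farC [oddC | [w wC [leaf_w degI_w]]]; last first.
  by right; exists w => //; split => //; exact: leq_trans degI_w (degI_set_color w).
left; move: oddC; rewrite /F_odd !num_F_edgesE; congr (odd _ = true).
apply: eq_bigr => z zC; apply: eq_card => w; rewrite !inE /set_color.
by case: (w =P v) => [->|] //=; rewrite (negbTE (farC z zC)) (negbTE vW) !andbF.
Qed.

Lemma independent_set_color : independent e [set y in W | phi y] ->
  (c -> degI W phi v = 0) -> independent e [set y in W' | phi' y].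
Proof.
move=> indW noI y z; rewrite !inE /set_color.
have key u : c -> u \in W -> phi u -> ~~ e v u.
  move=> /noI/eqP; rewrite cards_eq0 => /eqP noIv uW pu; apply/negP => evu.
  have : u \in [set w in W | e v w && phi w] by rewrite !inE uW evu pu.
  by rewrite noIv inE.
case: (y =P v) => [->|yv]; case: (z =P v) => [->|zv] /=.
- by rewrite irr_e.
- by move=> hc /andP [zW pz]; exact: key.
- by move=> /andP [yW py] hc; rewrite sym_e; exact: key.
- by move=> /andP [yW py] /andP [zW pz]; apply: indW; rewrite inE ?yW ?zW.
Qed.

Lemma induces_forest_set_color : induces_forest e [set y in W | ~~ phi y] ->
  (~~ c -> degF W phi v <= 1) -> induces_forest e [set y in W' | ~~ phi' y].
Proof.
move=> forestW fewF [s [us s3 sF cyc]].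
have inF y : y \in s -> y \in W' /\ ~~ phi' y.
  by move=> /(allP sF); rewrite !inE => /andP [].
have [vs | vNs] := boolP (v \in s); last first.
  apply: forestW; exists s; split => //; apply/allP => y ys; have [yW' py] := inF y ys.
  have yv : y != v by apply: contraNneq vNs => <-.
  by move: yW' py; rewrite !inE /set_color (negbTE yv) /= => -> ->.
have cF : ~~ c by have [_] := inF v vs; rewrite /set_color eqxx.
have [u [w [us' ws uw evu evw]]] := cycle_two_neighbours us s3 cyc vs.
have inFv y : y \in s -> e v y -> y \in [set w in W | e v w && ~~ phi w].
  move=> ys evy; have [yW' py] := inF y ys.
  have yv : y != v by apply: contraTneq evy => ->; rewrite irr_e.
  by move: yW' py; rewrite !inE /set_color (negbTE yv) evy /= => -> ->.
have : 1 < degF W phi v by apply/card_gt1P; exists u, w; rewrite !inFv.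
by rewrite ltnNge fewF.
Qed.

End SetColor.

Section Component.
Variables (W : {set V}) (x : V).
Hypothesis xW : x \notin W.
Local Notation T := (comp_out e W x).
Local Notation R := (rel_out e W).

Lemma mem_comp_out y : (y \in T) = (y \notin W) && connect R x y.
Proof. by rewrite inE. Qed.

Lemma comp_out_self : x \in T. Proof. by rewrite mem_comp_out xW connect0. Qed.

Lemma comp_out_notin y : y \in T -> y \notin W.
Proof. by rewrite mem_comp_out => /andP []. Qed.

Lemma comp_out_closed y z : y \in T -> z \notin W -> e y z -> z \in T.
Proof.
rewrite !mem_comp_out => /andP [yW xy] zW eyz; rewrite zW.
by apply: connect_trans xy (connect1 _); rewrite /rel_out eyz yW zW.
Qed.

Lemma comp_out_isolated : deg_in T x = 0 -> T = [set x].
Proof.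
move/eqP; rewrite cards_eq0 => /eqP noNx; apply/setP => z; rewrite in_set1.
apply/idP/eqP => [|->]; last exact: comp_out_self.
rewrite mem_comp_out => /andP [_ /connectP [[|a p] /= xp ->] //].
case/andP: xp => /and3P [exa _ aW] _.
have : a \in [set y in T | e x y] by rewrite inE exa (comp_out_closed comp_out_self).
by rewrite noNx inE.
Qed.

Variable v : V.
Hypothesis vT : v \in T.
Local Notation W' := (v |: W).

Lemma comp_out_nonadj y p : y \notin T -> y \notin W -> p \in comp_out e W y -> ~~ e p v.
Proof.
move=> yT yW; rewrite inE => /andP [pW yp]; apply/negP => epv; apply/negP: yT.
move: (vT); rewrite mem_comp_out => /andP [vW xv]; rewrite mem_comp_out yW negbK.
apply: connect_trans xv _; rewrite connect_out_sym.
by apply: connect_trans yp (connect1 _); rewrite /rel_out epv pW vW.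
Qed.

Lemma comp_out_setU1_other y : y \notin W' -> y \notin T -> comp_out e W' y = comp_out e W y.
Proof.
rewrite !inE negb_or => /andP [yv yW] yT; apply/setP => z; rewrite !inE negb_or.
apply/idP/idP.
  by move=> /andP [/andP [_ ->]]; apply: connect_out_subset; rewrite subsetUr.
move=> /andP [zW yz].
have avoid u : connect R y u -> u != v.
  move=> yu; apply: contraNneq yT => uv; rewrite yW /=.
  move: (vT); rewrite mem_comp_out -uv => /andP [_ xu].
  by apply: connect_trans xu _; rewrite connect_out_sym.
by rewrite (avoid z yz) zW /=; exact: connect_out_setU1.
Qed.

(* A simple path through v enters and leaves it by two distinct neighbours in T,
   so a leaf v is on no simple path between two other vertices. *)
Lemma comp_out_setU1_leaf y : deg_in T v <= 1 -> y \in T :\ v -> comp_out e W' y = T :\ v.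
Proof.
move=> leaf_v; rewrite !inE => /andP [yv /andP [yW xy]].
apply/setP => z; rewrite !inE negb_or.
apply/idP/idP.
  move=> /andP [/andP [zv zW] yz]; rewrite zv zW /=.
  by apply: connect_trans xy (connect_out_subset _ yz); rewrite subsetUr.
move=> /and3P [zv zW xz]; rewrite zv zW /=.
have : connect R y z by apply: connect_trans _ xz; rewrite connect_out_sym.
case/connectP => p yp zl; rewrite zl in zv *; move: zv.
case: (shortenP yp) => p' yp' up' _ zv.
apply/connectP; exists p' => //; apply: path_out_setU1 => //.
rewrite inE negb_or eq_sym yv /=; apply/negP => vp.
case/splitPr: vp yp' up' zv => p1 [|w p2]; first by rewrite last_cat /= eqxx.
rewrite cat_path /= => /and3P [_ uv /andP [vw _]] up' _.
have uw : last y p1 != w.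
  apply/eqP => uw; move: up'; rewrite -cons_uniq -cat_cons cat_uniq => /and3P [_ /hasPn h _].
  by move: (h w); rewrite -uw mem_last !inE eqxx orbT => /(_ isT).
move: uv vw; rewrite /rel_out => /and3P [euv uW _] /and3P [evw _ wW].
have uT : last y p1 \in T by apply: comp_out_closed vT uW _; rewrite sym_e.
have wT : w \in T by apply: comp_out_closed vT wW evw.
have : 1 < deg_in T v.
  by apply/card_gt1P; exists (last y p1), w; split; rewrite // in_set ?uT ?wT ?evw // sym_e.
by rewrite ltnNge leaf_v.
Qed.

End Component.

Section Leaves.
Variable T : {set V}.
Hypothesis forestT : induces_forest e T.

Definition simple_path_in (s : seq V) := [&& uniq s, all (fun y => y \in T) s & sorted e s].

Lemma simple_path_in_rev s : simple_path_in s -> simple_path_in (rev s).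
Proof.
rewrite /simple_path_in rev_uniq all_rev rev_sorted => /and3P [-> -> /=].
by case: s => [|a s] //=; rewrite (@eq_path _ _ e) // => u w; exact: sym_e.
Qed.

Lemma longest_path_head_leaf s : simple_path_in s -> 2 <= size s ->
  (forall s', simple_path_in s' -> size s' <= size s) -> forall x0, deg_in T (head x0 s) = 1.
Proof.
case: s => [|a [|b s]] // ps _ longest x0; rewrite /deg_in /=.
suff -> : [set z in T | e a z] = [set b] by rewrite cards1.
case/and3P: (ps) => us allT /= /andP [eab ps'].
have /and3P [aT bT sT] := allT.
apply/setP => z; rewrite in_set1 in_set; apply/idP/idP => [/andP [zT eaz]|/eqP ->]; last first.
  by rewrite bT eab.
have [zs | zNs] := boolP (z \in [:: a, b & s]); last first.
  have : simple_path_in (z :: [:: a, b & s]).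
    apply/and3P; split; first by rewrite cons_uniq zNs.
      by apply/allP => y; rewrite inE => /orP [/eqP -> // | /(allP allT)].
    by rewrite /= sym_e eaz eab.
  by move/longest; rewrite ltnn.
move: zs; rewrite !inE => /or3P [/eqP za | // | zs]; first by rewrite za irr_e in eaz.
exfalso; case/splitPr: zs us sT ps' longest => p1 p2 us sT ps' _.
apply: forestT; exists (a :: b :: rcons p1 z).
have cat_s : [:: a, b & p1 ++ z :: p2] = (a :: b :: rcons p1 z) ++ p2 by rewrite /= cat_rcons.
split.
- by move: us; rewrite cat_s cat_uniq => /andP [].
- by rewrite /= size_rcons.
- apply/allP => y yc; have : y \in [:: a, b & p1 ++ z :: p2] by rewrite cat_s mem_cat yc.
  by rewrite !inE => /or3P [/eqP -> | /eqP -> | /(allP sT)].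
- rewrite /= rcons_path last_rcons eab (sym_e z) eaz andbT.
  by rewrite rcons_path; move: ps'; rewrite cat_path /= => /and3P [-> -> _].
Qed.

Lemma exists_longest_simple_path s0 : simple_path_in s0 ->
  exists s, [/\ simple_path_in s, size s0 <= size s &
                forall s', simple_path_in s' -> size s' <= size s].
Proof.
move=> ps0; pose P n := [exists t : n.-tuple V, simple_path_in t].
have P_size s : simple_path_in s -> P (size s).
  by move=> ps; apply/existsP; exists (in_tuple s).
have P_bound n : P n -> n <= #|V|.
  move=> /existsP [t /and3P [ut _ _]].
  by rewrite -(size_tuple t) -(card_uniqP ut) max_card.
have [n /existsP [t pt] longest] := ex_maxnP (ex_intro P _ (P_size s0 ps0)) P_bound.
exists t; rewrite size_tuple; split=> // [|s' /P_size /longest //]; exact/longest/P_size.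
Qed.

Lemma two_leaves x y : x \in T -> y \in T -> e x y ->
  exists v1 v2, [/\ v1 \in T, v2 \in T, v1 != v2, deg_in T v1 = 1 & deg_in T v2 = 1].
Proof.
move=> xT yT exy.
have pxy : simple_path_in [:: x; y].
  by rewrite /simple_path_in /= inE xT yT exy !andbT; apply: contraTneq exy => ->; rewrite irr_e.
have [[|a [|b s]] [ps s2 longest]] := exists_longest_simple_path pxy; rewrite // in s2.
have leaf_a := longest_path_head_leaf ps s2 longest a.
have := longest_path_head_leaf (simple_path_in_rev ps); rewrite size_rev => /(_ s2 longest a).
rewrite (lastI a (b :: s)) rev_rcons /= => leaf_z.
exists a, (last b s); case/and3P: ps => /andP [aNs _] /allP allT _; split => //.
- by apply: allT; rewrite inE eqxx.
- by apply: allT; rewrite inE mem_last orbT.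
- by apply: contraNneq aNs => ->; rewrite mem_last.
Qed.

End Leaves.

Definition good_partial_coloring (W : {set V}) (phi : V -> bool) :=
  [/\ near_bipartite_on e W phi, induces_forest e (~: W),
      forall y, y \notin W -> degree e y = 3 &
      forall y, y \notin W -> component_good W phi (comp_out e W y)].

Section Choice.
Variables (W : {set V}) (phi : V -> bool) (x : V).
Hypothesis xW : x \notin W.
Hypothesis good : good_partial_coloring W phi.
Local Notation T := (comp_out e W x).

Definition admissible_choice v (c : bool) :=
  [/\ v \in T, deg_in T v <= 1, c -> degI W phi v = 0, ~~ c -> degF W phi v <= 1 &
      T :\ v != set0 -> component_good (v |: W) (set_color phi v c) (T :\ v)].

Lemma good_partial_coloring_set_color v c : admissible_choice v c ->
  good_partial_coloring (v |: W) (set_color phi v c).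
Proof.
case: good => [[indW forestW] forest_out deg3 goodW] [vT leaf_v noI fewF goodTv].
have vW := comp_out_notin vT.
split.
- by split; [exact: independent_set_color | exact: induces_forest_set_color].
- by apply: induces_forest_subset forest_out; rewrite setCS subsetUr.
- by move=> y; rewrite !inE negb_or => /andP [_ /deg3].
move=> y yW'; have yW : y \notin W by move: yW'; rewrite !inE negb_or => /andP [].
have [yT | yNT] := boolP (y \in T).
  have yTv : y \in T :\ v by rewrite in_setD1 yT andbT; move: yW'; rewrite !inE negb_or => /andP [].
  by rewrite (comp_out_setU1_leaf vT leaf_v yTv); apply: goodTv; apply/set0Pn; exists y.
rewrite (comp_out_setU1_other vT yW' yNT); apply: component_good_set_color_far => //.
  move=> p; exact: (comp_out_nonadj vT yNT yW).
exact: goodW.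
Qed.

Lemma component_good_comp_out : component_good W phi T.
Proof. by case: good => _ _ _; apply. Qed.

Lemma comp_out_degree_split v : v \in T -> deg_in T v + degI W phi v + degF W phi v = 3.
Proof.
case: good => _ _ deg3 _ vT; rewrite -(deg3 v (comp_out_notin vT)).
apply/esym/degree_split => z evz; apply/idP/idP => [/comp_out_notin // | zW].
exact: comp_out_closed vT zW evz.
Qed.

Lemma isolated_choice : deg_in T x = 0 -> admissible_choice x (1 < degF W phi x).
Proof.
move=> isol; have := comp_out_degree_split (comp_out_self xW); rewrite isol add0n => split3.
have Tx := comp_out_isolated xW isol.
split; [exact: comp_out_self | by rewrite isol | |
         by rewrite ltnNge negbK | by rewrite Tx setDv eqxx].
move=> F2; case: component_good_comp_out => [|[w]]; last first.
  by rewrite Tx in_set1 => /eqP -> [_ I2]; move: I2; rewrite -/(degI W phi x); lia.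
rewrite /F_odd num_F_edgesE Tx big_set1.
have [->|hF] : degF W phi x = 2 \/ degF W phi x = 3 by lia.
  by [].
by rewrite hF in split3 *; lia.
Qed.

Lemma leaf_choice v : v \in T -> deg_in T v = 1 -> 0 < degF W phi v ->
  admissible_choice v (degF W phi v == 2).
Proof.
move=> vT leaf_v F_v; have := comp_out_degree_split vT; rewrite leaf_v => split3.
split; rewrite ?leaf_v //; [by move/eqP; lia | by move/eqP; lia | move=> _].
have := num_F_edges_set_color phi (degF W phi v == 2) (comp_out_notin vT) vT.
rewrite leaf_v; case: component_good_comp_out => [oddT | [w wT [leaf_w I_w]]] count.
  left; move: oddT; rewrite /F_odd.
  have [F2|F1] : degF W phi v = 2 \/ degF W phi v = 1 by lia.
    by move: count; rewrite F2 /= addn0 => <-; rewrite oddD addbF.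
  by move: count; rewrite F1 /= => /addIn <-.
right; apply: (F_leaf_good_set_color _ (comp_out_notin vT) wT) => //.
by apply: contraTneq I_w => ->; rewrite -ltnNge ltnS -/(degI W phi v); lia.
Qed.

Lemma bare_leaf_choice v1 v2 : v1 \in T -> v2 \in T -> v1 != v2 ->
  deg_in T v1 = 1 -> deg_in T v2 = 1 -> degF W phi v1 = 0 -> degF W phi v2 = 0 ->
  admissible_choice v1 false.
Proof.
move=> v1T v2T v12 leaf1 leaf2 F1 F2; have := comp_out_degree_split v2T.
rewrite leaf2 F2 => split3.
split; rewrite ?leaf1 ?F1 // => _; right.
apply: (F_leaf_good_set_color _ (comp_out_notin v1T) v2T); rewrite 1?eq_sym ?leaf2 //.
by lia.
Qed.

Lemma exists_admissible_choice : exists v c, admissible_choice v c.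
Proof.
have [isol | ] := eqVneq (deg_in T x) 0.
  by exists x, (1 < degF W phi x); exact: isolated_choice.
rewrite -lt0n => /card_gt0P [y]; rewrite inE => /andP [yT exy].
have forestT : induces_forest e T.
  case: good => _ forest_out _ _; apply: induces_forest_subset forest_out.
  by apply/subsetP => z /comp_out_notin; rewrite inE.
have [v1 [v2 [v1T v2T v12 leaf1 leaf2]]] := two_leaves forestT (comp_out_self xW) yT exy.
have [F1 | F1] := posnP (degF W phi v1); last first.
  by exists v1, (degF W phi v1 == 2); exact: leaf_choice.
have [F2 | F2] := posnP (degF W phi v2); last first.
  by exists v2, (degF W phi v2 == 2); exact: leaf_choice.
by exists v1, false; exact: bare_leaf_choice v1T v2T v12 leaf1 leaf2 F1 F2.
Qed.

End Choice.

Lemma good_partial_coloring_extends (W : {set V}) (phi : V -> bool) :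
  good_partial_coloring W phi ->
  exists phi2 : V -> bool,
    (forall y, y \in W -> phi2 y = phi y) /\ near_bipartite_on e setT phi2.
Proof.
move: {2}#|~: W| (erefl #|~: W|) => n; elim: n W phi => [|n IH] W phi size_out good.
  move: good; move/eqP: size_out; rewrite cards_eq0 => /eqP/(congr1 (@setC V)).
  by rewrite setCK setC0 => -> [nb _ _ _]; exists phi.
have [x xNW] : exists x, x \notin W.
  have /card_gt0P [x] : 0 < #|~: W| by rewrite size_out.
  by rewrite inE; exists x.
have [v [c choice]] := exists_admissible_choice xNW good.
have [vT _ _ _ _] := choice; have vW := comp_out_notin vT.
have size' : #|~: (v |: W)| = n.
  move: size_out; rewrite (cardsD1 v) inE vW add1n => -[<-].
  by apply: eq_card => y; rewrite !inE negb_or.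
have [phi2 [agree nb]] := IH _ _ size' (good_partial_coloring_set_color good choice).
exists phi2; split => // y yW; rewrite agree ?inE ?yW ?orbT // /set_color.
by case: eqP => // yv; move: vW; rewrite -yv yW.
Qed.

End Graph.

Theorem lemma4p35 (V : finType) (e : rel V) (W : {set V}) (phi' : V -> bool) :
  simple_graph e ->
  near_bipartite_on e W phi' ->
  induces_forest e (~: W) ->
  (forall x, x \notin W -> degree e x = 3) ->
  (forall x, x \notin W ->
     F_odd e W phi' (comp_out e W x) \/ F_leaf_good e W phi' (comp_out e W x)) ->
  exists phi : V -> bool,
    (forall x, x \in W -> phi x = phi' x) /\ near_bipartite_on e setT phi.
Proof.
move=> [sym_e irr_e] nb forest_out deg3 good_comps.
by apply: good_partial_coloring_extends => //; split.
Qed.
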